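(* Let $S_t,B_t\subseteq\mathbb{R}^d$ be nonempty compact convex sets and $x_t\in\mathbb{B}$, with $\mathrm{proj}(S_t,x_t)=[\underline{s}_t,\overline{s}_t]$ and $\mathrm{proj}(B_t,x_t)=[\underline{b}_t,\overline{b}_t]$. Suppose we are in the strong overlap case, i.e. $\overline{s}_t>\underline{b}_t$, it is not the case that ($\mathrm{width}(S_t,x_t)\ge\mathrm{width}(B_t,x_t)$ and $(\underline{s}_t+\overline{s}_t)/2\le\underline{b}_t$), and it is not the case that ($\mathrm{width}(B_t,x_t)\ge\mathrm{width}(S_t,x_t)$ and $(\underline{b}_t+\overline{b}_t)/2\ge\overline{s}_t$). Let $s\in S_t$, $b\in B_t$, and suppose a price $p_t$ posted to both agents is accepted by both, i.e. $\langle s,x_t\rangle\le p_t\le\langle b,x_t\rangle$; set $S_{t+1}=\{v\in S_t:\langle v,x_t\rangle\le p_t\}$ and $B_{t+1}=\{v\in B_t:\langle v,x_t\rangle\ge p_t\}$. Then at least one of the following holds: \[\mathrm{vol}(S_{t+1}+z\mathbb{B})\le(1-6^{-d})\,\mathrm{vol}(S_t+z\mathbb{B})\ \ \text{for all } z\le\tfrac14\mathrm{width}(S_t,x_t),\] \[\mathrm{vol}(B_{t+1}+z\mathbb{B})\le(1-6^{-d})\,\mathrm{vol}(B_t+z\mathbb{B})\ \ \text{for all } z\le\tfrac14\mathrm{width}(B_t,x_t).\]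
   Context: $\mathbb{B}$ is the Euclidean unit ball in $\mathbb{R}^d$; $A+z\mathbb{B}=\{y+zw:y\in A,w\in\mathbb{B}\}$ is the Minkowski sum; $\mathrm{vol}$ is $d$-dimensional volume. $\mathrm{proj}(A,x)=\{\langle v,x\rangle:v\in A\}$ and $\mathrm{width}(A,x)=\max_{v\in A}\langle v,x\rangle-\min_{v\in A}\langle v,x\rangle$. Here $S_t$ and $B_t$ are the seller's and buyer's confidence regions (containing the true seller vector $s$ and buyer vector $b$ respectively), and in the case that both agents accept, the confidence regions are updated as described. *)

From HB Require Import structures.
From mathcomp Require Import all_boot all_order all_algebra.
From mathcomp Require Import all_classical all_reals all_analysis.
Set Implicit Arguments. Unset Strict Implicit. Unset Printing Implicit Defensive.
Import Order.TTheory GRing.Theory Num.Theory.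
Import numFieldNormedType.Exports.
Local Open Scope classical_set_scope.
Local Open Scope ring_scope.

Section Defs.
Variables (R : realType) (d : nat).

Definition dotp (v x : 'rV[R]_d) : R := \sum_(i < d) v ord0 i * x ord0 i.

Definition unit_ball : set 'rV[R]_d := [set w | dotp w w <= 1].

Definition convex_in (A : set 'rV[R]_d) : Prop :=
  forall u v t, A u -> A v -> 0 <= t -> t <= 1 -> A (t *: u + (1 - t) *: v).

Definition mink_ball (A : set 'rV[R]_d) (z : R) : set 'rV[R]_d :=
  [set y | exists2 a, A a & exists2 w, unit_ball w & y = a + z *: w].

Definition proj_on (A : set 'rV[R]_d) (x : 'rV[R]_d) : set R := [set dotp v x | v in A].

(* d-dimensional Lebesgue (outer) measure: infimum of total volumes of
   countable covers by closed axis-parallel boxes [a k, b k]. *)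
Definition rbox (a b : 'rV[R]_d) : set 'rV[R]_d :=
  [set x | forall i, a ord0 i <= x ord0 i <= b ord0 i].
Definition box_vol (a b : 'rV[R]_d) : R := \prod_(i < d) Num.max 0 (b ord0 i - a ord0 i).

Definition vol (A : set 'rV[R]_d) : \bar R :=
  ereal_inf [set e : \bar R | exists a b : nat -> 'rV[R]_d,
     A `<=` \bigcup_k rbox (a k) (b k) /\
     e = (\sum_(0 <= k <oo) (box_vol (a k) (b k))%:E)%E].
End Defs.
Arguments unit_ball {R d}.

From HB Require Import structures.
From mathcomp Require Import all_boot all_order all_algebra.
From mathcomp Require Import all_classical all_reals all_analysis.
From mathcomp Require Import ring lra.
From Stdlib Require Cantor.
Import Order.TTheory GRing.Theory Num.Theory.
Import numFieldNormedType.Exports.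
Local Open Scope classical_set_scope.
Local Open Scope ring_scope.
Set Implicit Arguments. Unset Strict Implicit. Unset Printing Implicit Defensive.

(* The hypotheses on the widths say that the quarter points of the two
   projections cross: blo + (bhi - blo)/4 < shi - (shi - slo)/4.  Hence the
   price lies at least a quarter of the width below the top of proj(S, x) or at
   least a quarter above the bottom of proj(B, x); replacing x by -x reduces the
   second case to the first.  Let K = S + zB and let c be its point furthest in
   direction x.  Since K is convex, the homothety of ratio 1/6 about c maps K
   into itself, onto a set of volume 6^-d vol K, and into a half-space that is
   separated by a slab of positive width from S' + zB (this uses z <= width/4).
   The outer measure is additive on sets separated by a slab, so
   vol (S' + zB) <= vol K - 6^-d vol K. *)

Section InnerProduct.
Variables (R : realType) (d : nat).
Implicit Types (u v w x : 'rV[R]_d).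

Lemma dotpC u v : dotp u v = dotp v u.
Proof. by apply: eq_bigr => i _; rewrite mulrC. Qed.

Lemma dotpDl u v w : dotp (u + v) w = dotp u w + dotp v w.
Proof. by rewrite /dotp -big_split; apply: eq_bigr => i _; rewrite mxE mulrDl. Qed.

Lemma dotpZl (a : R) u w : dotp (a *: u) w = a * dotp u w.
Proof. by rewrite /dotp mulr_sumr; apply: eq_bigr => i _; rewrite mxE mulrA. Qed.

Lemma dotpNl u w : dotp (- u) w = - dotp u w.
Proof. by rewrite -scaleN1r dotpZl mulN1r. Qed.

Lemma dotpDr u v w : dotp w (u + v) = dotp w u + dotp w v.
Proof. by rewrite dotpC dotpDl !(dotpC w). Qed.

Lemma dotpZr (a : R) u w : dotp w (a *: u) = a * dotp w u.
Proof. by rewrite dotpC dotpZl dotpC. Qed.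

Lemma dotpNr u w : dotp w (- u) = - dotp w u.
Proof. by rewrite dotpC dotpNl dotpC. Qed.

Lemma dotp_ge0 u : 0 <= dotp u u.
Proof. by apply: sumr_ge0 => i _; rewrite -expr2 sqr_ge0. Qed.

Lemma dotp_eq0 u : dotp u u = 0 -> u = 0.
Proof.
move=> /eqP; rewrite psumr_eq0 => [/allP u0|i _]; last by rewrite -expr2 sqr_ge0.
apply/rowP => i; rewrite mxE.
by apply/eqP; rewrite -sqrf_eq0 expr2; exact: (u0 i (mem_index_enum i)).
Qed.

Lemma dim_gt0 u v x : dotp u x != dotp v x -> (0 < d)%N.
Proof. by rewrite /dotp; case: (d) u v x => // u v x; rewrite !big_ord0 eqxx. Qed.

Definition dnorm x := Num.sqrt (dotp x x).

Lemma dnorm_ge0 x : 0 <= dnorm x.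
Proof. exact: sqrtr_ge0. Qed.

Lemma dnorm_sqr x : dnorm x * dnorm x = dotp x x.
Proof. by rewrite -expr2 sqr_sqrtr ?dotp_ge0. Qed.

Lemma dnorm_le1 x : unit_ball x -> dnorm x <= 1.
Proof. by move=> x1; rewrite /dnorm -sqrtr1 ler_sqrt. Qed.

Lemma unit_ballN w : unit_ball w -> unit_ball (- w).
Proof. by rewrite /unit_ball /= dotpNl dotpNr opprK. Qed.

Lemma dotp_le_dnorm w x : unit_ball w -> dotp w x <= dnorm x.
Proof.
move=> w1; have n0 := dnorm_ge0 x; have nn := dnorm_sqr x.
have [n_eq0|n_ne0] := eqVneq (dnorm x) 0.
  have x0 : x = 0 by apply: dotp_eq0; rewrite -nn n_eq0 mulr0.
  by rewrite n_eq0 x0 /dotp big1 // => i _; rewrite mxE mulr0.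
have n_gt0 : 0 < dnorm x by rewrite lt_neqAle eq_sym n_ne0.
have := dotp_ge0 (dnorm x *: w - x).
rewrite !(dotpDl, dotpDr, dotpNl, dotpNr, dotpZl, dotpZr) (dotpC x w) -nn => h.
have : dnorm x * (dotp w x - dnorm x) <= 0 by move: w1; rewrite /unit_ball /=; nra.
by rewrite pmulr_rle0 // subr_le0.
Qed.

Lemma unit_ball_dotp_bounds w x : unit_ball w -> - dnorm x <= dotp w x <= dnorm x.
Proof.
move=> w1; rewrite dotp_le_dnorm // andbT lerNl -dotpNl.
exact/dotp_le_dnorm/unit_ballN.
Qed.

Lemma unit_ball_normalize x : unit_ball ((dnorm x)^-1 *: x).
Proof.
rewrite /unit_ball /= dotpZl dotpZr -dnorm_sqr.
have [->|nz] := eqVneq (dnorm x) 0; first by rewrite invr0 !mul0r.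
by rewrite mulKf // mulVf.
Qed.

Lemma dotp_normalize x : dotp ((dnorm x)^-1 *: x) x = dnorm x.
Proof.
rewrite dotpZl -dnorm_sqr; have [->|nz] := eqVneq (dnorm x) 0.
  by rewrite invr0 mul0r.
by rewrite mulKf.
Qed.

End InnerProduct.

Section Convexity.
Variables (R : realType) (d : nat).
Implicit Types (A : set 'rV[R]_d) (c v : 'rV[R]_d).

Lemma convex_unit_ball : convex_in (@unit_ball R d).
Proof.
move=> u v t; rewrite /unit_ball /= => u1 v1 t0 t1.
have := dotp_ge0 (u - v).
rewrite !(dotpDl, dotpDr, dotpNl, dotpNr, dotpZl, dotpZr) (dotpC v u) => h.
have tt : 0 <= t * (1 - t) by apply: mulr_ge0; lra.
nra.
Qed.

Lemma convex_mink_ball A z : convex_in A -> convex_in (mink_ball A z).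
Proof.
move=> cA _ _ t [a Aa [w w1 ->]] [a' Aa' [w' w1' ->]] t0 t1.
exists (t *: a + (1 - t) *: a'); first exact: cA.
exists (t *: w + (1 - t) *: w'); first exact: convex_unit_ball.
by apply/rowP => i; rewrite !mxE; ring.
Qed.

Definition homothety c (l : R) v := c + l *: (v - c).

Lemma homothetyK c l : l != 0 -> cancel (homothety c l) (homothety c l^-1).
Proof. by move=> l0 v; apply/rowP => i; rewrite !mxE; field. Qed.

Lemma dotp_homothety c l v x :
  dotp (homothety c l v) x = dotp c x + l * (dotp v x - dotp c x).
Proof. by rewrite dotpDl dotpZl dotpDl dotpNl. Qed.

Lemma homothety_convex_sub A c l :
  convex_in A -> A c -> 0 <= l -> l <= 1 -> homothety c l @` A `<=` A.
Proof.
move=> cA Ac l0 l1 _ [v Av <-].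
have -> : homothety c l v = l *: v + (1 - l) *: c.
  by rewrite /homothety scalerBr scalerBl scale1r addrCA addrA.
exact: cA.
Qed.

End Convexity.

Section OuterMeasure.
Variables (R : realType) (d : nat).
Implicit Types (a b c : 'rV[R]_d) (A K : set 'rV[R]_d).
Local Open Scope ereal_scope.

Lemma box_vol_ge0 a b : (0 <= box_vol a b)%R.
Proof. by apply: prodr_ge0 => i _; rewrite le_max lexx. Qed.

Lemma box_vol_point a : (0 < d)%N -> box_vol a a = 0%R.
Proof.
move=> d0; rewrite /box_vol (eq_bigr (fun=> 0%R)) => [|i _]; last by rewrite subrr maxxx.
by rewrite prodr_const expr0n card_ord; case: (d) d0.
Qed.

Lemma vol_ge0 A : 0 <= vol A.
Proof.
apply: le_ereal_inf_tmp => _ [a [b [_ ->]]].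
by apply: nneseries_ge0 => n _; rewrite lee_fin box_vol_ge0.
Qed.

Lemma vol_le_cover2 A (a b : nat -> nat -> 'rV[R]_d) :
  (forall y, A y -> exists k j, rbox (a k j) (b k j) y) ->
  vol A <= \sum_(k <oo) \sum_(j <oo) (box_vol (a k j) (b k j))%:E.
Proof.
move=> cover; pose F (p : nat * nat) := (box_vol (a p.1 p.2) (b p.1 p.2))%:E.
have F0 p : 0 <= F p by rewrite lee_fin box_vol_ge0.
pose g n := Cantor.of_nat n.
have volA : vol A <= \sum_(n <oo) F (g n).
  apply: ereal_inf_lbound.
  exists (fun n => a (g n).1 (g n).2), (fun n => b (g n).1 (g n).2); split => //.
  move=> y /cover [k [j kj]]; exists (Cantor.to_nat (k, j)) => //.
  by rewrite /g Cantor.cancel_of_to.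
apply: (le_trans volA); rewrite le_eqVlt; apply/orP; left; apply/eqP.
rewrite nneseries_esumT // -(reindex_esum [set: nat] [set: nat * nat] g F); last first.
  split=> [n _ //|m n _ _ gmn|p _].
  - by rewrite -(Cantor.cancel_to_of m) -(Cantor.cancel_to_of n); congr Cantor.to_nat.
  - by exists (Cantor.to_nat p) => //; rewrite /g Cantor.cancel_of_to.
rewrite nneseries_esumT => [|k]; last by apply: nneseries_ge0 => j _ _; exact: (F0 (k, j)).
have -> : [set: nat * nat] = [set: nat] `*`` (fun=> [set: nat]) by apply/seteqP; split.
rewrite -(@esum_esum R nat nat [set: nat] (fun=> [set: nat]) (fun i j => F (i, j)))
  => [|i j _ _]; last exact: F0.
by apply: eq_esum => k _; rewrite nneseries_esumT // => j; exact: (F0 (k, j)).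
Qed.

Lemma box_vol_homothety c (l : R) a b : (0 <= l)%R ->
  box_vol (homothety c l a) (homothety c l b) = (l ^+ d * box_vol a b)%R.
Proof.
move=> l0; rewrite /box_vol -[in (l ^+ _)%R](card_ord d) -prodr_const -big_split /=.
apply: eq_bigr => i _; rewrite !mxE maxr_pMr // mulr0.
by congr Num.max; ring.
Qed.

Lemma rbox_homothety c (l : R) a b y : (0 <= l)%R ->
  rbox a b y -> rbox (homothety c l a) (homothety c l b) (homothety c l y).
Proof.
move=> l0 aby i; have /andP[ay yb] := aby i.
by rewrite !mxE !lerD2l !ler_wpM2l ?lerD2r.
Qed.

Lemma le_vol_homothety c (l : R) K : (0 < l)%R ->
  (l ^+ d)%:E * vol K <= vol (homothety c l @` K).
Proof.
move=> l0; apply: le_ereal_inf_tmp => _ [a [b [cover ->]]].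
pose l' := (l^-1)%R; have l'0 : (0 <= l')%R by rewrite invr_ge0 ltW.
have volK : vol K <= \sum_(n <oo) (box_vol (homothety c l' (a n)) (homothety c l' (b n)))%:E.
  apply: ereal_inf_lbound; eexists _, _; split; last reflexivity.
  move=> y Ky; have [k _ hk] := cover _ (ex_intro2 _ _ y Ky erefl).
  exists k => //; rewrite -(homothetyK c (lt0r_neq0 l0) y).
  exact: rbox_homothety.
have ld0 : (0 < l ^+ d)%R by rewrite exprn_gt0.
apply: le_trans (lee_wpmul2l _ volK) _; first by rewrite lee_fin ltW.
under eq_eseriesr do rewrite box_vol_homothety // EFinM.
rewrite nneseriesZl => [|i _]; last by rewrite lee_fin box_vol_ge0.
by rewrite muleA -EFinM exprVn mulfV ?gt_eqF // mul1e.
Qed.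

End OuterMeasure.

Section FineCovers.
Variables (R : realType) (d : nat).
Implicit Types (a b u x y : 'rV[R]_d).

Definition box_width a b (i : 'I_d) : R := Num.max 0 (b ord0 i - a ord0 i).

Definition grid_pt a b (M : nat) (f : 'I_d -> nat) : 'rV[R]_d :=
  \row_i (a ord0 i + (f i)%:R * (box_width a b i / M%:R)).

Lemma box_width_ge0 a b i : 0 <= box_width a b i.
Proof. by rewrite le_max lexx. Qed.

Lemma grid_pt_succ a b M f i :
  grid_pt a b M (fun i => (f i).+1) ord0 i - grid_pt a b M f ord0 i = box_width a b i / M%:R.
Proof. by rewrite !mxE -natr1; ring. Qed.

Lemma box_vol_grid a b M f : (0 < M)%N ->
  box_vol (grid_pt a b M f) (grid_pt a b M (fun i => (f i).+1)) = box_vol a b / M%:R ^+ d.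
Proof.
move=> M0; rewrite /box_vol -[in M%:R ^+ _](card_ord d) -prodr_const -prodfV -big_split /=.
apply: eq_bigr => i _; rewrite grid_pt_succ max_r //.
by rewrite divr_ge0 ?box_width_ge0.
Qed.

Lemma itv_grid_cover (lo hi y : R) M : (0 < M)%N -> lo <= y <= hi ->
  exists j : 'I_M,
    lo + j%:R * ((hi - lo) / M%:R) <= y <= lo + j.+1%:R * ((hi - lo) / M%:R).
Proof.
move=> M0 /andP[loy yhi]; set q := (hi - lo) / M%:R.
have M0R : 0 < M%:R :> R by rewrite ltr0n.
have [hilo|hilo] := eqVneq hi lo.
  by exists (Ordinal M0); rewrite /q hilo subrr !mul0r !mulr0 !addr0 loy -hilo.
have q_gt0 : 0 < q by rewrite divr_gt0 // subr_gt0 lt_neqAle eq_sym hilo (le_trans loy yhi).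
set t := (y - lo) / q.
have t0 : 0 <= t by rewrite divr_ge0 ?subr_ge0 // ltW.
have tM : t <= M%:R by rewrite ler_pdivrMr // /q mulrCA divff ?mulr1 ?lt0r_neq0 //; lra.
have lo_le (j : nat) : (j%:R <= t) = (lo + j%:R * q <= y).
  by rewrite ler_pdivlMr //; apply/idP/idP; lra.
have le_hi (j : nat) : (t <= j%:R) = (y <= lo + j%:R * q).
  by rewrite ler_pdivrMr //; apply/idP/idP; lra.
have [tr|tr] := ltnP (Num.truncn t) M.
  exists (Ordinal tr); rewrite /= -lo_le -le_hi.
  by have /andP[-> /ltW ->] := truncn_itv t0.
have M1M : (M.-1 < M)%N by rewrite ltn_predL.
exists (Ordinal M1M); rewrite /= -lo_le -le_hi prednK // tM andbT.
have tt : (Num.truncn t)%:R <= t by rewrite truncn_le.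
by apply: le_trans tt; rewrite ler_nat (leq_trans (leq_pred M) tr).
Qed.

Lemma rbox_grid_cover a b M y : (0 < M)%N -> rbox a b y ->
  exists f : {ffun 'I_d -> 'I_M},
    rbox (grid_pt a b M (fun i => f i)) (grid_pt a b M (fun i => (f i).+1)) y.
Proof.
move=> M0 aby.
have cell i : exists j : 'I_M,
    a ord0 i + j%:R * (box_width a b i / M%:R) <= y ord0 i
    <= a ord0 i + j.+1%:R * (box_width a b i / M%:R).
  have /andP[ay yb] := aby i.
  rewrite /box_width max_r ?subr_ge0 ?(le_trans ay yb) //.
  exact/itv_grid_cover/andP.
have [f fP] := fin_all_exists cell.
by exists [ffun i => f i] => i; rewrite !mxE ffunE.
Qed.

Lemma rbox_dotp_oscillation a b x u y : rbox a b u -> rbox a b y ->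
  dotp y x - dotp u x <= \sum_i `|x ord0 i| * (b ord0 i - a ord0 i).
Proof.
move=> abu aby; rewrite /dotp -sumrB; apply: ler_sum => i _.
have /andP[au ub] := abu i; have /andP[ay yb] := aby i.
rewrite -mulrBl mulrC; apply: le_trans (ler_norm _) _; rewrite normrM.
by apply: ler_wpM2l => //; rewrite ler_norml; apply/andP; split; lra.
Qed.

Lemma box_fine_cover a b x (g : R) : (0 < d)%N -> 0 < g ->
  exists lo hi : nat -> 'rV[R]_d,
    [/\ rbox a b `<=` \bigcup_j rbox (lo j) (hi j),
        (\sum_(j <oo) (box_vol (lo j) (hi j))%:E = (box_vol a b)%:E)%E &
        forall j u y, rbox (lo j) (hi j) u -> rbox (lo j) (hi j) y ->
          dotp y x - dotp u x < g].
Proof.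
move=> d0 g0; set C := \sum_i `|x ord0 i| * box_width a b i.
set M := (Num.truncn (C / g)).+1.
have M0 : (0 < M)%N by [].
have CM : C / M%:R < g by rewrite ltr_pdivrMr // mulrC -ltr_pdivrMr ?truncnS_gt.
pose cells := enum {ffun 'I_d -> 'I_M}; set N := size cells.
pose F j : 'I_d -> nat := fun i => nth [ffun=> Ordinal M0] cells j i.
(* Indices past the enumeration of the cells give point boxes, of volume 0 as d > 0. *)
pose lo j := grid_pt a b M (F j).
pose hi j := grid_pt a b M (if (j < N)%N then fun i => (F j i).+1 else F j).
exists lo, hi; split.
- move=> y /(rbox_grid_cover M0) [f fy]; exists (index f cells) => //.
  by rewrite /lo /hi /F index_mem mem_enum nth_index ?mem_enum.
- rewrite (nneseries_split (f := fun j => (box_vol (lo j) (hi j))%:E) 0 N) => [|j _]; last first.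
    by rewrite lee_fin box_vol_ge0.
  rewrite add0n eseries0 => [|j Nj _]; last by rewrite /hi ltnNge Nj box_vol_point.
  rewrite adde0 (@eq_big_nat _ _ _ 0 N _ (fun=> (box_vol a b / M%:R ^+ d)%:E))
    => [|j /andP[_ jN]]; last first.
    by rewrite /hi jN box_vol_grid.
  rewrite sumEFin sumr_const_nat subn0 /N -cardE card_ffun !card_ord.
  by rewrite -[_ *+ (M ^ d)]mulr_natr natrX mulfVK // expf_neq0 // pnatr_eq0.
- move=> j u y ju jy; apply: le_lt_trans (rbox_dotp_oscillation x ju jy) _.
  apply: le_lt_trans CM; rewrite /C mulr_suml; apply: ler_sum => i _.
  rewrite -mulrA; apply: ler_wpM2l => //; rewrite /hi; case: ifP => _.
    by rewrite grid_pt_succ.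
  by rewrite subrr divr_ge0 ?box_width_ge0.
Qed.

End FineCovers.

Section Separation.
Variables (R : realType) (d : nat).
Local Open Scope ereal_scope.

Lemma vol_separated_add_le (A H K : set 'rV[R]_d) (x : 'rV[R]_d) (t1 t2 : R) :
  (0 < d)%N -> (t1 < t2)%R ->
  (forall u, A u -> dotp u x <= t1)%R -> (forall y, H y -> t2 <= dotp y x)%R ->
  A `<=` K -> H `<=` K -> vol A + vol H <= vol K.
Proof.
move=> d0 t12 At1 Ht2 AK HK.
(* Refine every box of a cover of K into cells on which <., x> varies by less
   than t2 - t1: a cell meeting A misses H, so each cell is charged to one side. *)
have gap : (0 < t2 - t1)%R by rewrite subr_gt0.
apply: le_ereal_inf_tmp => _ [a [b [Kab ->]]].
have /choice[c cP] k : exists c : (nat -> 'rV[R]_d) * (nat -> 'rV[R]_d),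
    [/\ rbox (a k) (b k) `<=` \bigcup_j rbox (c.1 j) (c.2 j),
        \sum_(j <oo) (box_vol (c.1 j) (c.2 j))%:E = (box_vol (a k) (b k))%:E &
        forall j u y, rbox (c.1 j) (c.2 j) u -> rbox (c.1 j) (c.2 j) y ->
          (dotp y x - dotp u x < t2 - t1)%R].
  have [lo [hi ?]] := box_fine_cover (a k) (b k) x d0 gap.
  by exists (lo, hi).
pose lo k := (c k).1; pose hi k := (c k).2.
pose meetsA k j := `[< exists2 u, A u & rbox (lo k j) (hi k j) u >].
pose hiA k j := if meetsA k j then hi k j else lo k j.
pose hiH k j := if meetsA k j then lo k j else hi k j.
have cover k y : rbox (a k) (b k) y -> exists j, rbox (lo k j) (hi k j) y.
  by case: (cP k) => cov _ _ /cov [j _]; exists j.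
have volA : vol A <= \sum_(k <oo) \sum_(j <oo) (box_vol (lo k j) (hiA k j))%:E.
  apply: vol_le_cover2 => u Au.
  have [k _ /cover [j uj]] := Kab u (AK u Au).
  have meets : meetsA k j by apply/asboolP; exists u.
  by exists k, j; rewrite /hiA meets.
have volH : vol H <= \sum_(k <oo) \sum_(j <oo) (box_vol (lo k j) (hiH k j))%:E.
  apply: vol_le_cover2 => y Hy.
  have [k _ /cover [j yj]] := Kab y (HK y Hy).
  exists k, j; rewrite /hiH ifN //; apply/asboolP => -[u Au uj].
  case: (cP k) => _ _ /(_ j u y uj yj).
  by have := At1 u Au; have := Ht2 y Hy; lra.
have split_cell k j : (box_vol (lo k j) (hiA k j))%:E + (box_vol (lo k j) (hiH k j))%:E
    = (box_vol (lo k j) (hi k j))%:E.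
  by rewrite /hiA /hiH; case: ifP; rewrite box_vol_point // ?adde0 ?add0e.
have cell_ge0 k j e : 0 <= (box_vol (lo k j) e)%:E by rewrite lee_fin box_vol_ge0.
have row_ge0 k (e : nat -> 'rV[R]_d) : 0 <= \sum_(j <oo) (box_vol (lo k j) (e j))%:E.
  by apply: nneseries_ge0 => j _ _; exact: cell_ge0.
apply: le_trans (leeD volA volH) _.
rewrite -nneseriesD => [|k _ _|k _ _]; [|exact: row_ge0..].
apply: lee_nneseries => [k _ _|k _]; first exact: adde_ge0.
rewrite -nneseriesD => [|j _ _|j _ _]; [|exact: cell_ge0..].
under eq_eseriesr do rewrite split_cell.
by case: (cP k) => _ -> _.
Qed.

End Separation.

Lemma lee_onemM_of_leD (R : realType) (a h k : \bar R) (c : R) :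
  c < 1 -> (0 <= a)%E -> (0 <= k)%E -> (a + h <= k)%E -> (c%:E * k <= h)%E ->
  (a <= (1 - c)%:E * k)%E.
Proof.
move=> c1; case: k => [k||] //=; last first.
  by move=> *; rewrite gt0_muley ?lte_fin ?subr_gt0 ?leey.
case: a => [a||] //; case: h => [h||] //=; rewrite ?lee_fin ?leey ?leNye //.
by move=> a0 k0 ahk chk; rewrite mulrBl mul1r; lra.
Qed.

Section HalfspaceCut.
Variables (R : realType) (d : nat).
Implicit Types (K : set 'rV[R]_d) (x : 'rV[R]_d).

Lemma vol_mink_ball_cut_le K x (lo hi p z : R) top :
  (0 < d)%N -> convex_in K -> unit_ball x ->
  (forall v, K v -> lo <= dotp v x) -> K top -> dotp top x = hi ->
  p < hi - (hi - lo) / 4 -> 0 <= z -> z <= (hi - lo) / 4 ->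
  (vol (mink_ball [set v | K v /\ (dotp v x <= p)%R] z)
     <= (1 - 6%:R ^- d)%:E * vol (mink_ball K z))%E.
Proof.
move=> d0 cK x1 Klo Ktop htop p_lt z0 zle.
set n := dnorm x; have n0 : 0 <= n := dnorm_ge0 x; have n1 : n <= 1 := dnorm_le1 x1.
have zn : z * n <= z by rewrite ler_piMr.
have zn0 : 0 <= z * n by rewrite mulr_ge0.
set Kz := mink_ball K z; set Cz := mink_ball [set v | K v /\ dotp v x <= p] z.
pose c := top + z *: (n^-1 *: x).
have Kzc : Kz c by exists top => //; exists (n^-1 *: x); last by []; exact: unit_ball_normalize.
have cx : dotp c x = hi + z * n by rewrite dotpDl dotpZl dotp_normalize htop.
have Cz_le u : Cz u -> dotp u x <= p + z * n.
  move=> [v [_ vp] [w w1 ->]]; rewrite dotpDl dotpZl.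
  by have /andP[_ /(ler_wpM2l z0) zwx] := unit_ball_dotp_bounds x w1; rewrite -/n in zwx; lra.
have Kz_ge u : Kz u -> lo - z * n <= dotp u x.
  move=> [v Kv [w w1 ->]]; rewrite dotpDl dotpZl; have := Klo v Kv.
  by have /andP[/(ler_wpM2l z0) zwx _] := unit_ball_dotp_bounds x w1; rewrite mulrN -/n in zwx; lra.
pose l : R := 6^-1.
have shrunk_ge y : (homothety c l @` Kz) y -> hi + z * n - l * (hi - lo + 2 * z * n) <= dotp y x.
  by move=> [u /Kz_ge Kzu <-]; rewrite dotp_homothety cx /l; lra.
rewrite -exprVn; apply: lee_onemM_of_leD (vol_ge0 _) (vol_ge0 _) _ _.
- by rewrite exprn_ilt1 ?invr_ge0 ?ler0n ?invf_lt1 ?ltr1n ?ltr0n // -lt0n.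
- apply: (vol_separated_add_le d0 _ Cz_le shrunk_ge); first by rewrite /l; lra.
    by move=> u [v [Kv _] [w w1 ->]]; exists v => //; exists w.
  apply: homothety_convex_sub; rewrite /l ?invr_ge0 ?ler0n ?invf_le1 ?ler1n //.
  exact: convex_mink_ball.
- by apply: le_vol_homothety; rewrite invr_gt0 ltr0n.
Qed.

End HalfspaceCut.

Section Projections.
Variables (R : realType) (d : nat).
Implicit Types (A : set 'rV[R]_d) (v x : 'rV[R]_d).

Lemma proj_on_itv_mem A x (lo hi : R) v :
  proj_on A x = [set` `[lo, hi]] -> A v -> lo <= dotp v x <= hi.
Proof.
move=> Ax Av; have : proj_on A x (dotp v x) by exists v.
by rewrite Ax /= in_itv.
Qed.

Lemma proj_on_itv_extremes A x (lo hi : R) : A !=set0 -> proj_on A x = [set` `[lo, hi]] ->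
  (exists2 v, A v & dotp v x = lo) /\ (exists2 v, A v & dotp v x = hi).
Proof.
move=> [v Av] Ax; have /andP[lov vhi] := proj_on_itv_mem Ax Av.
have attained y : lo <= y <= hi -> exists2 v, A v & dotp v x = y.
  move=> loyhi; have [w Aw <-] : proj_on A x y by rewrite Ax /= in_itv.
  by exists w.
by split; apply: attained; rewrite lexx ?andbT /=; lra.
Qed.

End Projections.

Lemma strong_overlap_quarters (R : realType) (slo shi blo bhi : R) :
  ~ (shi - slo >= bhi - blo /\ (slo + shi) / 2 <= blo) ->
  ~ (bhi - blo >= shi - slo /\ (blo + bhi) / 2 >= shi) ->
  blo + (bhi - blo) / 4 < shi - (shi - slo) / 4.
Proof.
move=> notS notB; case: (lerP (bhi - blo) (shi - slo)) => widths.
  have : ~ (slo + shi) / 2 <= blo by move=> ?; apply: notS.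
  by move/negP; rewrite -ltNge; lra.
have : ~ shi <= (blo + bhi) / 2 by move=> ?; apply: notB; split => //; exact: ltW.
by move/negP; rewrite -ltNge; lra.
Qed.

Unset Implicit Arguments.

Theorem lemma4p7 (R : realType) (d : nat)
  (S B : set 'rV[R]_d) (x : 'rV[R]_d) (slo shi blo bhi p : R)
  (s b : 'rV[R]_d) :
  S !=set0 -> compact S -> convex_in S ->
  B !=set0 -> compact B -> convex_in B ->
  unit_ball x ->
  proj_on S x = [set` `[slo, shi]] -> proj_on B x = [set` `[blo, bhi]] ->
  (* strong overlap case *)
  shi > blo ->
  ~ (shi - slo >= bhi - blo /\ (slo + shi) / 2 <= blo) ->
  ~ (bhi - blo >= shi - slo /\ (blo + bhi) / 2 >= shi) ->
  S s -> B b ->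
  dotp s x <= p -> p <= dotp b x ->
  let S' := [set v | S v /\ dotp v x <= p] in
  let B' := [set v | B v /\ dotp v x >= p] in
  (forall z : R, 0 <= z -> z <= (shi - slo) / 4 ->
     (vol (mink_ball S' z) <= (1 - 6%:R ^- d)%:E * vol (mink_ball S z))%E)
  \/
  (forall z : R, 0 <= z -> z <= (bhi - blo) / 4 ->
     (vol (mink_ball B' z) <= (1 - 6%:R ^- d)%:E * vol (mink_ball B z))%E).
Proof.
move=> S0 _ cvS B0 _ cvB x1 projS projB overlap notS notB _ _ _ _ S' B'.
have [_ [top Stop htop]] := proj_on_itv_extremes S0 projS.
have [[bot Bbot hbot] _] := proj_on_itv_extremes B0 projB.
have d0 : (0 < d)%N by apply: (dim_gt0 (u := top) (v := bot) (x := x)); rewrite htop hbot gt_eqF.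
have Slo v : S v -> slo <= dotp v x by move=> /(proj_on_itv_mem projS) /andP[].
have Bhi v : B v -> dotp v (- x) >= - bhi.
  by move=> /(proj_on_itv_mem projB) /andP[_]; rewrite dotpNr lerN2.
have quarters := strong_overlap_quarters notS notB.
have [p_lt|p_ge] := ltrP p (shi - (shi - slo) / 4).
  by left=> z z0 zle; exact: (vol_mink_ball_cut_le d0 cvS x1 Slo Stop htop p_lt z0 zle).
right=> z z0 zle.
have -> : B' = [set v | B v /\ dotp v (- x) <= - p].
  by apply/seteqP; split=> v [Bv vp]; split=> //; move: vp; rewrite dotpNr lerN2.
apply: (vol_mink_ball_cut_le d0 cvB (unit_ballN x1) Bhi Bbot); rewrite ?dotpNr ?hbot //; lra.
Qed.
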